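(* Each member of $\mathcal{G}_1$ is cycle-extendable.
   Context: A half biwheel is obtained from a path $P$ of even length (possibly a single vertex) with color classes $A,B$, whose ends $u,v$ lie in $A$, by adding a new vertex $h$ (the hub) adjacent to every vertex of $A$; $u,v$ are the corners (if $P$ is a single vertex the result is $K_2$ and $u=v$). $\mathcal{G}_1$ (generalized wheels) consists of the graphs obtained by taking an odd $k\ge 3$ and disjoint half biwheels $H_0,\dots,H_{k-1}$ with corners $u_i,v_i$, identifying all of their hubs into a single vertex $h$, and adding the edges $v_iu_{i+1}$ for all $0\le i\le k-1$, indices modulo $k$. A matching covered graph (connected, at least two vertices, every edge in a perfect matching) is cycle-extendable if for every even cycle $C$ the graph $G-V(C)$ has a perfect matching. *)

From mathcomp Require Import all_boot.
Set Implicit Arguments. Unset Strict Implicit. Unset Printing Implicit Defensive.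

Definition is_edge (V : finType) (e : rel V) (E : {set V}) : Prop :=
  exists x y, e x y /\ E = [set x; y].

Definition perfect_matching_on (V : finType) (e : rel V) (S : {set V})
    (M : {set {set V}}) : Prop :=
  (forall E, E \in M -> is_edge e E /\ E \subset S) /\
  (forall x, x \in S -> #|[set E in M | x \in E]| = 1).

Definition perfect_matching (V : finType) (e : rel V) (M : {set {set V}}) :=
  perfect_matching_on e [set: V] M.

Definition matching_covered (V : finType) (e : rel V) : Prop :=
  [/\ forall x y : V, connect e x y,
      2 <= #|V| &
      forall x y, e x y -> exists M, perfect_matching e M /\ [set x; y] \in M].

Definition is_graph_cycle (V : finType) (e : rel V) (c : seq V) : Prop :=
  [/\ cycle e c, uniq c & 3 <= size c].

Definition cycle_extendable (V : finType) (e : rel V) : Prop :=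
  matching_covered e /\
  forall c : seq V, is_graph_cycle e c -> ~~ odd (size c) ->
    exists M, perfect_matching_on e (~: [set x in c]) M.

(* Parameters: k (odd, >= 3) and m : 'I_k -> nat; the i-th half biwheel H_i comes
   from the path P_i = p_{i,0} p_{i,1} ... p_{i,2 m_i} of even length 2 m_i, with
   A-class = even-indexed vertices, corners u_i = p_{i,0}, v_i = p_{i,2 m_i}.
   Vertex None is the common hub h; Some (i; j) is p_{i,j}. *)
Definition gwV (k : nat) (m : 'I_k -> nat) : finType :=
  option {i : 'I_k & 'I_((2 * m i).+1)}.

(* directed version of the non-hub adjacencies: path edges p_{i,j} p_{i,j+1},
   and the edges v_i u_{i+1} (indices mod k) *)
Definition gw_pathadj (k : nat) (m : 'I_k -> nat)
    (a b : {i : 'I_k & 'I_((2 * m i).+1)}) : bool :=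
  ((tag a == tag b) && ((val (tagged a)).+1 == val (tagged b)))
  || [&& val (tagged a) == 2 * m (tag a), val (tagged b) == 0
       & val (tag b) == (val (tag a)).+1 %% k].

Definition gw_adj (k : nat) (m : 'I_k -> nat) (x y : gwV m) : bool :=
  match x, y with
  | None, None => false
  | None, Some b => ~~ odd (val (tagged b))
  | Some a, None => ~~ odd (val (tagged a))
  | Some a, Some b => gw_pathadj a b || gw_pathadj b a
  end.

From mathcomp Require Import all_boot zify.
Set Implicit Arguments. Unset Strict Implicit. Unset Printing Implicit Defensive.

(* The vertices other than the hub h form the rim, an odd cycle g 0, g 1, ..., g (N-1)
   (indices modulo N), and in a generalized wheel every rim vertex lies an odd number of
   steps after a neighbour of h.  Hence a spoke h g(u) together with the rim edges
   g(u+1) g(u+2), g(u+3) g(u+4), ... is a perfect matching, and these matchings cover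
   every edge.  A cycle avoiding h would be the whole rim, which is odd; an even cycle
   through h meets the rim in a path, i.e. an arc, of odd length, whose complement is an
   arc of even length, matched by consecutive rim edges. *)

Section PerfectMatchings.
Variables (V : finType) (e : rel V).

Lemma perfect_matching_on_edge x y :
  e x y -> perfect_matching_on e [set x; y] [set [set x; y]].
Proof.
move=> exy; split=> [E /set1P -> | v vxy]; first by split=> //; exists x, y.
rewrite (_ : [set E in [set [set x; y]] | v \in E] = [set [set x; y]]) ?cards1 //.
by apply/setP=> E; rewrite !inE; case: eqP => // ->.
Qed.

Lemma perfect_matching_onU (S1 S2 : {set V}) (M1 M2 : {set {set V}}) :
  [disjoint S1 & S2] ->
  perfect_matching_on e S1 M1 -> perfect_matching_on e S2 M2 ->
  perfect_matching_on e (S1 :|: S2) (M1 :|: M2).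
Proof.
move=> S12 [edges1 cover1] [edges2 cover2].
have drop_other (S S' : {set V}) (M M' : {set {set V}}) x :
    (forall E, E \in M' -> E \subset S') -> [disjoint S & S'] -> x \in S ->
    [set E in M :|: M' | x \in E] = [set E in M | x \in E].
  move=> inS' SS' xS; apply/setP=> E; rewrite !inE.
  have [/inS' /subsetP ES'|] := boolP (E \in M'); last by rewrite orbF.
  suff -> : (x \in E) = false by rewrite !andbF.
  by apply/negP => /ES'; rewrite (disjointFr SS' xS).
split=> [E | x].
  rewrite in_setU => /orP[/edges1 | /edges2] [edgeE sub]; split=> //.
    exact: subset_trans sub (subsetUl _ _).
  exact: subset_trans sub (subsetUr _ _).
rewrite in_setU => /orP[xS | xS].
  by rewrite (drop_other S1 S2) ?cover1 // => E /edges2[].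
rewrite setUC (drop_other S2 S1) ?cover2 // 1?disjoint_sym //.
by move=> E /edges1[].
Qed.

End PerfectMatchings.

Section Wheel.
Variables (V : finType) (e : rel V) (h : V) (N : nat) (g : nat -> V).
Hypothesis odd_N : odd N.
Hypothesis rim_eq : forall a b, (g a == g b) = (a == b %[mod N]).
Hypothesis rim_neq_hub : forall t, g t != h.
Hypothesis rim_onto : forall v, v != h -> exists t, v = g t.
Hypothesis sym_e : symmetric e.
Hypothesis hub_loopless : ~~ e h h.
Hypothesis rim_adjE :
  forall a b, e (g a) (g b) = (b == a.+1 %[mod N]) || (a == b.+1 %[mod N]).
Hypothesis spoke_before :
  forall t, exists u d, [/\ e h (g u), odd d, d < N & g (u + d) = g t].

Lemma rim_shiftrE a b c : (g (a + c) == g (b + c)) = (g a == g b).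
Proof. by rewrite !rim_eq eqn_modDr. Qed.

Lemma rim_shiftr a b c : g a = g b -> g (a + c) = g (b + c).
Proof. by move/eqP; rewrite -(rim_shiftrE _ _ c) => /eqP. Qed.

Lemma rim_window_inj z i j : i < N -> j < N -> g (z + i) = g (z + j) -> i = j.
Proof. by move=> iN jN /eqP; rewrite rim_eq eqn_modDl !modn_small // => /eqP. Qed.

Lemma rim_adj a b : e (g a) (g b) -> g b = g a.+1 \/ g a = g b.+1.
Proof. by rewrite rim_adjE -!rim_eq => /orP[] /eqP; [left | right]. Qed.

Lemma rim_window_cover z t : exists2 j, j < N & g t = g (z + j).
Proof.
have N_gt0 := odd_gt0 odd_N.
exists ((t + (N - z %% N)) %% N); first by rewrite ltn_mod.
apply/eqP; rewrite rim_eq modnDmr {1}(divn_eq z N).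
have := ltn_pmod z N_gt0; rewrite (_ : _ + _ = t + (z %/ N).+1 * N); last lia.
by rewrite addnC modnMDl.
Qed.

Definition arc z L : {set V} := [set v in map g (iota z L)].

Lemma arcP z L v : reflect (exists2 i, i < L & v = g (z + i)) (v \in arc z L).
Proof.
rewrite inE; apply: (iffP mapP) => [[t] | [i iL ->]].
  by rewrite mem_iota => /andP[zt tzL] ->; exists (t - z); [lia | rewrite subnKC].
by exists (z + i); rewrite // mem_iota; lia.
Qed.

Lemma hub_notin_arc z L : h \notin arc z L.
Proof. by apply/arcP=> -[i _ /eqP]; rewrite eq_sym (negbTE (rim_neq_hub _)). Qed.

Lemma arc1 z : arc z 1 = [set g z].
Proof. by apply/setP=> v; rewrite !inE. Qed.

Lemma uniq_arc_seq z L : L <= N -> uniq (map g (iota z L)).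
Proof.
move=> LN; rewrite -[z]addn0 iotaDl -map_comp map_inj_in_uniq ?iota_uniq //.
by move=> i j; rewrite !mem_iota /= => iL jL /rim_window_inj; apply; lia.
Qed.

Lemma arc_complement z L : L <= N -> arc z L :|: arc (z + L) (N - L) = [set~ h].
Proof.
move=> LN; apply/setP=> v; rewrite !inE -mem_cat -map_cat -iotaD subnKC //.
apply/mapP/idP => [[t _ ->] | /rim_onto[t ->]]; first by rewrite rim_neq_hub.
by have [j jN ->] := rim_window_cover z t; exists (z + j); rewrite // mem_iota; lia.
Qed.

Lemma arc_disjoint z L : L <= N -> [disjoint arc z L & arc (z + L) (N - L)].
Proof.
move=> LN; have := uniq_arc_seq z (leqnn N).
rewrite -(subnKC LN) iotaD map_cat cat_uniq addKn => /and3P[_ /hasPn notin1 _].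
rewrite -setI_eq0; apply/eqP/setP=> v; rewrite !inE.
by apply/negbTE/negP=> /andP[v1 /notin1]; rewrite v1.
Qed.

Lemma card_rim : #|[set~ h]| = N.
Proof.
rewrite -(arc_complement 0 (leqnn N)) subnn (_ : arc _ 0 = set0) ?setU0.
  by rewrite cardsE (card_uniqP _) ?uniq_arc_seq // size_map size_iota.
by apply/setP=> v; rewrite !inE.
Qed.

Lemma size_rim_seq_le s : uniq s -> h \notin s -> size s <= N.
Proof.
move=> us hs; rewrite -card_rim -(card_uniqP us).
apply/subset_leq_card/subsetP => v vs; rewrite !inE.
by apply: contraNneq hs => <-.
Qed.

Lemma arc_setC z L : L <= N -> ~: (h |: arc z L) = arc (z + L) (N - L).
Proof.
move=> LN; apply/setP=> v; rewrite in_setC in_setU1.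
have [->|vh] := eqVneq v h; first by apply/esym/negbTE/hub_notin_arc.
have : v \in [set~ h] by rewrite in_setC1.
rewrite -(arc_complement z LN) in_setU => /orP[vA | vB].
  by rewrite vA (disjointFr (arc_disjoint z LN) vA).
by rewrite vB (disjointFl (arc_disjoint z LN) vB).
Qed.

Definition rim_edge t : {set V} := [set g t; g t.+1].

Definition arc_matching z n : {set {set V}} :=
  [set E in map (fun s => rim_edge (z + 2 * s)) (iota 0 n)].

Lemma arc_matchingP z n E :
  reflect (exists2 s, s < n & E = rim_edge (z + 2 * s)) (E \in arc_matching z n).
Proof.
rewrite inE; apply: (iffP mapP) => [[s] | [s sn ->]].
  by rewrite mem_iota => sn ->; exists s.
by exists s; rewrite ?mem_iota.
Qed.

Lemma rim_edge_shift a b : g a = g b -> rim_edge a = rim_edge b.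
Proof.
by move=> ab; rewrite /rim_edge -[a.+1]addn1 -[b.+1]addn1 (rim_shiftr 1 ab) ab.
Qed.

Lemma rim_edge_is_edge t : is_edge e (rim_edge t).
Proof. by exists (g t), (g t.+1); rewrite rim_adjE eqxx. Qed.

Lemma perfect_matching_on_arc z n :
  2 * n <= N -> perfect_matching_on e (arc z (2 * n)) (arc_matching z n).
Proof.
move=> nN; split=> [E /arc_matchingP[s sn ->] | _ /arcP[i iN ->]].
  split; first exact: rim_edge_is_edge.
  apply/subsetP=> v /set2P[] ->; apply/arcP.
    by exists (2 * s); first lia.
  by exists (2 * s).+1; rewrite ?addnS //; lia.
rewrite (_ : [set E in _ | _] = [set rim_edge (z + 2 * i./2)]) ?cards1 //.
apply/setP=> E; rewrite in_set1 [LHS]in_set.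
apply/andP/eqP => [[/arc_matchingP[s sn ->]] | ->].
  rewrite !inE -addnS => /orP[] /eqP /rim_window_inj i_eq; congr rim_edge; lia.
split; first by apply/arc_matchingP; exists i./2; first lia.
rewrite /rim_edge -addnS; apply/set2P.
by have [odd_i | even_i] := boolP (odd i); [right | left]; congr g; lia.
Qed.

Definition spoke_matching u : {set {set V}} :=
  [set h; g u] |: arc_matching u.+1 N./2.

Lemma spoke_matching_perfect u : e h (g u) -> perfect_matching e (spoke_matching u).
Proof.
move=> ehu; have N_gt0 := odd_gt0 odd_N.
have rim_arc : 2 * N./2 = N - 1 by lia.
have spoke_rimC : ~: [set h; g u] = arc u.+1 (2 * N./2).
  by rewrite rim_arc -addn1 -arc_setC // arc1.
rewrite /perfect_matching -(setUCr [set h; g u]) spoke_rimC.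
apply: perfect_matching_onU.
- by rewrite -spoke_rimC -subsets_disjoint.
- exact: perfect_matching_on_edge.
- by apply: perfect_matching_on_arc; lia.
Qed.

Lemma rim_edge_matched t : exists M, perfect_matching e M /\ rim_edge t \in M.
Proof.
have [u [d [ehu odd_d dN gud]]] := spoke_before t.
exists (spoke_matching u); split; first exact: spoke_matching_perfect.
apply/setU1P; right; apply/arc_matchingP; exists d./2; first lia.
by apply: rim_edge_shift; rewrite -gud; congr g; lia.
Qed.

Lemma wheel_matching_covered : matching_covered e.
Proof.
have rim_conn t : connect e (g 0) (g t).
  elim: t => [|t IHt]; first exact: connect0.
  by apply: connect_trans IHt (connect1 _); rewrite rim_adjE eqxx.
have conn v : connect e (g 0) v.
  have [->|/rim_onto[t ->] //] := eqVneq v h.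
  have [u [_ [ehu _ _ _]]] := spoke_before 0.
  by apply: connect_trans (rim_conn u) (connect1 _); rewrite sym_e.
split=> [x y | | x y].
- by apply: connect_trans (conn y); rewrite (sym_connect_sym sym_e).
- have := subset_leq_card (subsetT [set h; g 0]).
  by rewrite cards2 eq_sym rim_neq_hub cardsT.
wlog yh : x y / y != h => [sym_case exy | ].
  have [yh | ] := eqVneq y h; last by move/sym_case; apply.
  have xh : x != h by apply: contraNneq hub_loopless => xh; rewrite -{1}xh -yh.
  by rewrite setUC; apply: sym_case; rewrite // sym_e.
have [b ->] := rim_onto yh; have [-> ehb | /rim_onto[a ->]] := eqVneq x h.
  by exists (spoke_matching b); split; [exact: spoke_matching_perfect | exact: setU11].
case/rim_adj=> [gb | ga].
  by have [M [pmM aM]] := rim_edge_matched a; exists M; rewrite gb.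
by have [M [pmM bM]] := rim_edge_matched b; exists M; rewrite setUC ga.
Qed.

Lemma rim_seq_shift z z' n : g z = g z' -> map g (iota z n) = map g (iota z' n).
Proof.
move=> zz'; rewrite -[z]addn0 -[z']addn0 !iotaDl -!map_comp.
by apply: eq_map => i /=; apply: rim_shiftr.
Qed.

Lemma rim_seq_consl t z n :
  g z = g t.+1 -> g t :: map g (iota z n) = map g (iota t n.+1).
Proof. by move=> zt; rewrite (rim_seq_shift n zt). Qed.

Lemma rim_seq_consr t z n :
  g t = g (z + n) -> g t :: rev (map g (iota z n)) = rev (map g (iota z n.+1)).
Proof. by move=> tz; rewrite -addn1 iotaD map_cat rev_cat tz. Qed.

Lemma rim_path_arc x p : path e x p -> uniq (x :: p) -> h \notin x :: p ->
  exists z, x :: p = map g (iota z (size p).+1)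
            \/ x :: p = rev (map g (iota z (size p).+1)).
Proof.
elim: p x => [|y p IHp] x.
  by move=> _ _; rewrite mem_seq1 eq_sym => /rim_onto[t ->]; exists t; left.
move=> /andP[exy pyp] /andP[x_notin uyp].
rewrite in_cons negb_or eq_sym => /andP[/rim_onto[t Ex] hyp]; subst x.
have [z Eyp] := IHp y pyp uyp hyp; rewrite [size (y :: p)]/=.
have [/size0nil p0 | p_gt0] := posnP (size p).
  subst p; have {Eyp}yz : y = g z by case: Eyp => -[].
  rewrite yz in exy *; case/rim_adj: exy => [zt | tz].
    by exists t; left; exact: rim_seq_consl 1 zt.
  by exists z; right; rewrite -(@rim_seq_consr t z 1) // addn1.
case: Eyp => Eyp; rewrite Eyp in x_notin *.
- have [yz _] := Eyp; rewrite yz in exy.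
  case/rim_adj: exy => [zt | tz]; first by exists t; left; exact: rim_seq_consl _ zt.
  by move: x_notin; rewrite tz -addn1 map_f // mem_iota; lia.
- rewrite -(@rim_seq_consr (z + size p)) // in Eyp.
  have [yz _] := Eyp; rewrite yz in exy.
  case/rim_adj: exy => [zt | tz]; last first.
    by exists z; right; rewrite -(@rim_seq_consr t z (size p).+1) // addnS.
  have /eqP tz : g t == g (z + (size p).-1).
    by rewrite -(rim_shiftrE _ _ 1) !addn1 -addnS prednK ?zt.
  by move: x_notin; rewrite tz mem_rev map_f // mem_iota; lia.
Qed.

Lemma rim_cycle_size c : is_graph_cycle e c -> h \notin c -> size c = N.
Proof.
case=> cyc uc c_ge3 hc; have c_le_N := size_rim_seq_le uc hc.
case: c cyc uc c_ge3 hc c_le_N => [// | x p] cyc uc c_ge3 hc c_le_N.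
have [z rim_cyc] : exists z, cycle e (map g (iota z (size p).+1)).
  have /andP[pxp _] : path e x p && e (last x p) x by rewrite -rcons_path.
  have [z [Ec | Ec]] := rim_path_arc pxp uc hc; exists z; first by rewrite -Ec.
  by rewrite -[map _ _]revK -Ec rev_cycle (@eq_cycle _ _ e) // => a b; apply: sym_e.
change (size (x :: p)) with (size p).+1 in c_ge3, c_le_N |- *.
move: (size p) rim_cyc c_ge3 c_le_N => n rim_cyc n_ge2 n_lt_N.
move: rim_cyc; rewrite -addn1 iotaD map_cat -(rotr_cycle 1) cats1 rotr1_rcons.
case: n n_ge2 n_lt_N => [// | n] n_ge2 n_lt_N /andP[closing _].
have N_gt1 : 1 < N by lia.
(* The closing edge joins g (z + n.+1) to g z, so n.+2 = 0 or n.+1 = 1 modulo N. *)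
case/rim_adj: closing => [wrap | back].
  have [lt | ] := ltnP n.+2 N; last by lia.
  have := @rim_window_inj z _ 0 lt (odd_gt0 odd_N).
  by rewrite addn0 addnS -wrap => /(_ erefl).
have := @rim_window_inj z _ 1 n_lt_N N_gt1.
by rewrite addn1 back => /(_ erefl) [n0]; rewrite n0 in n_ge2.
Qed.

Lemma hub_cycle_complement c : is_graph_cycle e c -> h \in c ->
  exists z, ~: [set v in c] = arc z (N - (size c).-1).
Proof.
case=> cyc uc c_ge3 hc; set i := index h c.
have [p Ec] : exists p, rot i c = h :: p.
  by exists (drop i.+1 c ++ take i c); rewrite /rot (drop_nth h) ?index_mem ?nth_index.
have size_c : size c = (size p).+1 by rewrite -(size_rot i) Ec.
have set_c : [set v in c] = h |: [set v in p].
  by apply/setP=> v; rewrite !inE -(mem_rot i) Ec in_cons.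
have /andP[hp up] : uniq (h :: p) by rewrite -Ec rot_uniq.
case: p Ec size_c set_c hp up => [|x q] Ec size_c set_c hp up.
  by rewrite size_c in c_ge3.
have : cycle e (h :: x :: q) by rewrite -Ec rot_cycle.
rewrite /= rcons_path => /and3P[_ pxq _].
have [z Eq] := rim_path_arc pxq up hp.
have arc_q : [set v in x :: q] = arc z (size q).+1.
  by case: Eq => ->; apply/setP=> v; rewrite !inE ?mem_rev.
exists (z + (size q).+1).
by rewrite set_c arc_q size_c arc_setC // (@size_rim_seq_le (x :: q)).
Qed.

Theorem wheel_cycle_extendable : cycle_extendable e.
Proof.
split=> [|c c_cycle even_c]; first exact: wheel_matching_covered.
have [hc | hc] := boolP (h \in c); last first.
  by move: even_c; rewrite (rim_cycle_size c_cycle hc) odd_N.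
have [z ->] := hub_cycle_complement c_cycle hc; have [_ _ c_ge3] := c_cycle.
set n := (N - (size c).-1)./2; have even_arc : N - (size c).-1 = 2 * n by lia.
exists (arc_matching z n); rewrite even_arc.
by apply: perfect_matching_on_arc; rewrite -even_arc leq_subr.
Qed.

End Wheel.

Lemma gw_adj_sym k (m : 'I_k -> nat) : symmetric (@gw_adj k m).
Proof. by case=> [a|] [b|] //=; rewrite orbC. Qed.

Section GeneralizedWheelRim.
Variables (k : nat) (m : 'I_k.+1 -> nat).

Local Notation rimV := {i : 'I_k.+1 & 'I_((2 * m i).+1)}.

Definition gw_vertex (i : 'I_k.+1) (j : nat) : rimV :=
  Tagged (fun i => 'I_((2 * m i).+1)) (inord j : 'I_((2 * m i).+1)).

Definition gw_succ (a : rimV) : rimV :=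
  if tagged a < 2 * m (tag a) then gw_vertex (tag a) (tagged a).+1
  else gw_vertex (ordS (tag a)) 0.

Lemma rimV_eq (a b : rimV) : tag a = tag b -> tagged a = tagged b :> nat -> a = b.
Proof. by case: a b => i j [i' j'] /= ii'; subst i' => /val_inj->. Qed.

Lemma tagged_le (a : rimV) : tagged a <= 2 * m (tag a).
Proof. by rewrite -ltnS. Qed.

Lemma gw_vertexK (a : rimV) : gw_vertex (tag a) (tagged a) = a.
Proof. by apply: rimV_eq; rewrite //= inord_val. Qed.

Lemma gw_pathadjE a b : gw_pathadj a b = (b == gw_succ a).
Proof.
have := tagged_le a; have := tagged_le b; rewrite /gw_pathadj /gw_succ.
case: ifP => [end_a | last_a] b_le a_le; apply/idP/eqP => [| ->].
- case/orP=> [/andP[/eqP ab /eqP ab'] | /and3P[/eqP a_last]].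
    by apply: rimV_eq => /=; rewrite ?inordK ?ab.
  by rewrite a_last ltnn in end_a.
- by rewrite /= inordK ?eqxx.
- case/orP=> [/andP[/eqP ab /eqP ab'] | /and3P[_ /eqP b0 /eqP ab]].
    have mab : m (tag a) = m (tag b) by rewrite ab.
    rewrite /= in ab'; exfalso; lia.
  by apply: rimV_eq; rewrite /= ?inordK //; apply: val_inj.
- rewrite /= inordK // eqxx; apply/orP; right; rewrite eqxx /=; lia.
Qed.

Lemma gw_succ_inj : injective gw_succ.
Proof.
move=> a b; have := tagged_le a; have := tagged_le b; rewrite /gw_succ.
case: ifP => end_a; case: ifP => end_b b_le a_le;
  move=> /(congr1 (fun c : rimV => (tag c, nat_of_ord (tagged c)))) /=.
- by rewrite !inordK // => -[ab ab']; apply: rimV_eq.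
- by rewrite !inordK // => -[].
- by rewrite !inordK // => -[].
move=> /(congr1 fst) /= /ordS_inj ab; apply: rimV_eq => //.
have mab : m (tag a) = m (tag b) by rewrite ab.
lia.
Qed.

Lemma iter_gw_succ i j : j <= 2 * m i -> iter j gw_succ (gw_vertex i 0) = gw_vertex i j.
Proof.
elim: j => [|j IHj] ji //; rewrite iterS IHj 1?ltnW // /gw_succ /= inordK ?ji //.
by rewrite ltnS ltnW.
Qed.

Lemma gw_succ_last i : gw_succ (gw_vertex i (2 * m i)) = gw_vertex (ordS i) 0.
Proof. by rewrite /gw_succ /= inordK ?ltnn. Qed.

Definition gw_rim t : rimV := iter t gw_succ (gw_vertex ord0 0).

Definition gw_rim_length : nat := #|{: rimV}|.

Lemma gw_rim_onto b : exists t, gw_rim t = b.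
Proof.
have starts n : n < k.+1 -> exists t, gw_rim t = gw_vertex (inord n) 0.
  elim: n => [|n IHn] n_lt.
    by exists 0; congr gw_vertex; apply: val_inj; rewrite /= inordK.
  have [t rim_t] := IHn (ltnW n_lt); exists ((2 * m (inord n)).+1 + t).
  rewrite /gw_rim iterD -/(gw_rim t) rim_t iterS iter_gw_succ // gw_succ_last.
  by congr gw_vertex; apply: val_inj; rewrite /= !inordK ?modn_small //; lia.
have [t rim_t] := starts _ (ltn_ord (tag b)); exists (tagged b + t).
by rewrite /gw_rim iterD -/(gw_rim t) rim_t inord_val iter_gw_succ ?tagged_le ?gw_vertexK.
Qed.

Lemma gw_rim_eq t u : (gw_rim t == gw_rim u) = (t == u %[mod gw_rim_length]).
Proof.
set a0 := gw_vertex ord0 0.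
have order_a0 : order gw_succ a0 = gw_rim_length.
  rewrite -size_orbit -(card_uniqP (orbit_uniq _ _)); apply: eq_card => b.
  by rewrite -fconnect_orbit; have [s <-] := gw_rim_onto b; rewrite fconnect_iter.
have N_gt0 : 0 < gw_rim_length by rewrite -order_a0 order_gt0.
have iter_period q : iter (q * gw_rim_length) gw_succ a0 = a0.
  elim: q => [// | q IHq].
  by rewrite mulSn iterD IHq -order_a0 (iter_order gw_succ_inj).
have rim_mod s : gw_rim (s %% gw_rim_length) = gw_rim s.
  by rewrite {2}(divn_eq s gw_rim_length) addnC /gw_rim iterD iter_period.
have findex_rim s : findex gw_succ a0 (gw_rim (s %% gw_rim_length)) = s %% gw_rim_length.
  by rewrite findex_iter // order_a0 ltn_pmod.
rewrite -rim_mod -(rim_mod u); apply/eqP/eqP => [rim_tu | -> //].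
by rewrite -findex_rim rim_tu findex_rim.
Qed.

Lemma gw_rim_lengthE : gw_rim_length = 2 * \sum_(i < k.+1) m i + k.+1.
Proof.
rewrite /gw_rim_length card_tagged sumnE big_map big_enum /=.
under eq_bigr do rewrite card_ord -addn1.
by rewrite big_split /= -big_distrr sum1_card card_ord.
Qed.

Lemma gw_path_lt_rim i : 0 < k -> (2 * m i).+1 < gw_rim_length.
Proof. by move=> k_gt0; rewrite gw_rim_lengthE (bigD1 i) //=; lia. Qed.

(* An odd index j of P_i is one step after index j - 1; an even one is j + 1 steps after
   the last vertex of the previous path. *)
Lemma gw_spoke_before (a : rimV) : 0 < k ->
  exists b d, [/\ ~~ odd (nat_of_ord (tagged b)), odd d, d < gw_rim_length
                 & iter d gw_succ b = a].
Proof.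
move=> k_gt0; set i := tag a; set j := nat_of_ord (tagged a).
have j_le : j <= 2 * m i := tagged_le a.
have long := gw_path_lt_rim i k_gt0.
have a_iter : a = iter j gw_succ (gw_vertex i 0) by rewrite iter_gw_succ ?gw_vertexK.
have [odd_j | even_j] := boolP (odd j).
  exists (gw_vertex i j.-1), 1; split=> //; first by rewrite /= inordK; lia.
    lia.
  rewrite a_iter (_ : j = j.-1.+1); last lia.
  by rewrite !iterS iter_gw_succ //; lia.
exists (gw_vertex (ord_pred i) (2 * m (ord_pred i))), j.+1.
split=> //; first by rewrite /= inordK; lia.
  lia.
by rewrite iterSr gw_succ_last ord_predK -a_iter.
Qed.

Lemma odd_gw_rim_length : odd gw_rim_length = odd k.+1.
Proof. by rewrite gw_rim_lengthE; lia. Qed.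

Lemma gw_rim_adjE t u :
  gw_adj (Some (gw_rim t)) (Some (gw_rim u))
  = (u == t.+1 %[mod gw_rim_length]) || (t == u.+1 %[mod gw_rim_length]).
Proof. by rewrite /= !gw_pathadjE -!gw_rim_eq. Qed.

End GeneralizedWheelRim.

Theorem proposition5p8 (V : finType) (e : rel V) (k : nat) (m : 'I_k -> nat)
    (f : gwV m -> V) :
  odd k -> 3 <= k -> bijective f ->
  (forall x y, e (f x) (f y) = gw_adj x y) ->
  cycle_extendable e.
Proof.
case: k m f => [// | k] m f odd_k k_ge3 f_bij ef.
have [f' _ f'K] := f_bij; have f_inj := bij_inj f_bij; have k_gt0 : 0 < k by lia.
apply: (@wheel_cycle_extendable _ e (f None) (gw_rim_length m)
                                (fun t => f (Some (gw_rim m t)))).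
- by rewrite odd_gw_rim_length.
- by move=> a b; rewrite (inj_eq f_inj) (inj_eq (@Some_inj _)) gw_rim_eq.
- by move=> t; rewrite (inj_eq f_inj).
- move=> v vh; case E: (f' v) => [b|]; last by move: vh; rewrite -(f'K v) E eqxx.
  by have [t tb] := gw_rim_onto b; exists t; rewrite tb -E f'K.
- by move=> x y; rewrite -(f'K x) -(f'K y) !ef gw_adj_sym.
- by rewrite ef.
- by move=> a b; rewrite ef gw_rim_adjE.
move=> t; have [b [d [even_b odd_d d_lt rim_d]]] := gw_spoke_before (gw_rim m t) k_gt0.
have [u rim_u] := gw_rim_onto b; exists u, d; split; rewrite ?ef ?rim_u //.
by rewrite /gw_rim addnC iterD -/(gw_rim m u) rim_u rim_d.
Qed.
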